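(* Let $k\ge 1$, $H>0$, $\beta>0$, $h>0$, and consider a hierarchical-leadership flock $[0,1,\dots,k]$ with leader sets $\mathcal{L}(i)\subseteq\{0,\dots,i-1\}$, $\mathcal{L}(i)\neq\varnothing$ for $i\ge 1$. Let $\tilde x_0[n],\dots,\tilde x_k[n]\in\mathbb{R}^3$ ($n=0,1,2,\dots$) be positions, and for $j\in\mathcal{L}(i)$ set \[a_{ij}[n]=\frac{H}{\left(1+|\tilde x_j[n]-\tilde x_i[n]|^2/2\right)^{\beta}},\] and $a_{ij}[n]=0$ for $j\notin\mathcal{L}(i)$. Let $d_i[n]=\sum_{j\in\mathcal{L}(i)}a_{ij}[n]$ for $i\ge 1$, and let $L_n$ be the $k\times k$ matrix (indices $1,\dots,k$) with $(L_n)_{ii}=d_i[n]$, $(L_n)_{ij}=-a_{ij}[n]$ for $1\le j<i$, and $(L_n)_{ij}=0$ for $j>i$. Let $S[n]=I-hL_n$. Suppose that there is a constant $B\ge 0$ such that the reduced position vector $x[n]=(\tilde x_1[n]-\tilde x_0[n],\dots,\tilde x_k[n]-\tilde x_0[n])\in\mathbb{R}^{3k}$ satisfies $|x[n]|^2\le B$ for all $n\ge 0$, and set $d_\ast=H/(1+B)^{\beta}$. If $0<h<\frac{1}{2kH}$, then for all $n\ge 0$ every entry of $S[n]$ is nonnegative and \[\max_{i,j}S_{ij}[n]\le 1-hd_\ast=:\rho_h.\]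
   Context: A flock is under hierarchical leadership (HL) if its agents can be labeled $0,1,\dots,k$ so that agent $i$ is influenced by agent $j$ (i.e. $a_{ij}>0$) only if $j<i$, and every agent $i>0$ has a nonempty leader set $\mathcal{L}(i)=\{j: a_{ij}>0\}$. *)

From HB Require Import structures.
From mathcomp Require Import all_boot all_order all_algebra.
From mathcomp Require Import all_classical all_reals all_analysis.
Set Implicit Arguments. Unset Strict Implicit. Unset Printing Implicit Defensive.
Import Order.TTheory GRing.Theory Num.Theory.
Local Open Scope ring_scope.

Definition sqnorm3 {R : realType} (v : 'rV[R]_3) : R := \sum_(c < 3) v 0 c ^+ 2.

Definition hier_leaders (k : nat) (L : 'I_k.+1 -> {set 'I_k.+1}) : Prop :=
  (forall i j : 'I_k.+1, j \in L i -> (j < i)%N) /\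
  (forall i : 'I_k.+1, (0 < i)%N -> L i != finset.set0).

Definition aw {R : realType} (k : nat) (L : 'I_k.+1 -> {set 'I_k.+1})
  (H beta : R) (xt : 'I_k.+1 -> 'rV[R]_3) (i j : 'I_k.+1) : R :=
  if j \in L i then H / (1 + sqnorm3 (xt j - xt i) / 2) `^ beta else 0.

Definition dw {R : realType} (k : nat) (L : 'I_k.+1 -> {set 'I_k.+1})
  (H beta : R) (xt : 'I_k.+1 -> 'rV[R]_3) (i : 'I_k.+1) : R :=
  \sum_(j in L i) aw L H beta xt i j.

(* L_n, indexed by 1..k (row/column i : 'I_k stands for agent i+1) *)
Definition Lmat {R : realType} (k : nat) (L : 'I_k.+1 -> {set 'I_k.+1})
  (H beta : R) (xt : 'I_k.+1 -> 'rV[R]_3) : 'M[R]_k :=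
  \matrix_(i < k, j < k)
    if i == j then dw L H beta xt (lift ord0 i)
    else if (j < i)%N then - aw L H beta xt (lift ord0 i) (lift ord0 j)
    else 0.

Definition Smat {R : realType} (k : nat) (L : 'I_k.+1 -> {set 'I_k.+1})
  (H beta h : R) (xt : 'I_k.+1 -> 'rV[R]_3) : 'M[R]_k :=
  1%:M - h *: Lmat L H beta xt.

Definition reduced_sqnorm {R : realType} (k : nat) (xt : 'I_k.+1 -> 'rV[R]_3) : R :=
  \sum_(i < k) sqnorm3 (xt (lift ord0 i) - xt ord0).

From Pilot Require Import Defs.
From HB Require Import structures.
From mathcomp Require Import all_boot all_order all_algebra.
From mathcomp Require Import all_classical all_reals all_analysis.
From mathcomp Require Import lra.
Set Implicit Arguments. Unset Strict Implicit. Unset Printing Implicit Defensive.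
Import Order.TTheory GRing.Theory Num.Theory.
Local Open Scope ring_scope.

(* Every weight lies in [0, H] and every d_i in [d_*, k H]: the upper bound
   because agent i has at most k leaders, the lower bound because every agent
   has a leader and the bound on |x[n]|^2 keeps any two agents within squared
   distance 2 B.  Hence the diagonal 1 - h d_i of S[n] lies in
   [1 - h k H, 1 - h d_*] and the subdiagonal entries h a_ij in [0, h H];
   both intervals lie in [0, 1 - h d_*] as soon as 2 h k H < 1. *)

Section SquaredNorm.
Variable R : realType.
Implicit Types u v : 'rV[R]_3.

Lemma sqnorm3_ge0 v : 0 <= sqnorm3 v.
Proof. by apply: sumr_ge0 => c _; rewrite sqr_ge0. Qed.

Lemma sqnorm3_sub_le u v : sqnorm3 (u - v) <= 2 * (sqnorm3 u + sqnorm3 v).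
Proof.
rewrite /sqnorm3 -big_split /= mulr_sumr; apply: ler_sum => c _; rewrite !mxE.
have := sqr_ge0 (u 0 c + v 0 c); rewrite !expr2; nra.
Qed.

Lemma sqnorm3_pair_le_reduced k (xt : 'I_k.+1 -> 'rV[R]_3) (p q : 'I_k.+1) :
  sqnorm3 (xt p - xt q) <= 2 * reduced_sqnorm xt.
Proof.
pose r l := sqnorm3 (xt l - xt ord0).
have r_ge0 l : 0 <= r l by apply: sqnorm3_ge0.
have reducedE : reduced_sqnorm xt = \sum_l r l.
  by rewrite big_ord_recl /r subrr [sqnorm3 0]big1 ?add0r // => c _; rewrite mxE expr0n.
have [<-|neq_pq] := eqVneq p q.
  rewrite subrr [sqnorm3 0]big1 => [|c _]; last by rewrite mxE expr0n.
  by rewrite reducedE mulr_ge0 // sumr_ge0.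
have -> : xt p - xt q = (xt p - xt ord0) - (xt q - xt ord0).
  by rewrite opprB addrA subrK.
apply: le_trans (sqnorm3_sub_le _ _) _; rewrite ler_pM2l // reducedE.
rewrite (bigD1 p) // (bigD1 q) 1?eq_sym //= addrA lerDl.
exact: sumr_ge0.
Qed.

End SquaredNorm.

Lemma powR_ge1 (R : realType) (a r : R) : 1 <= a -> 0 <= r -> 1 <= a `^ r.
Proof. by move=> a_ge1 r_ge0; rewrite -(powRr0 a) ler_powR. Qed.

Lemma card_lt_ord_le n (A : {set 'I_n.+1}) (i : 'I_n.+1) :
  (forall j, j \in A -> (j < i)%N) -> (#|A| <= n)%N.
Proof.
move=> ltA; have : A \subset [set~ @ord_max n].
  apply/fintype.subsetP => j /ltA lt_ji; rewrite !inE; apply: contraTneq lt_ji => ->.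
  by rewrite -leqNgt -ltnS.
by move/subset_leq_card; rewrite cardsC1 card_ord.
Qed.

Section Weights.
Variables (R : realType) (k : nat) (L : 'I_k.+1 -> {set 'I_k.+1}).
Variables (H beta : R) (xt : 'I_k.+1 -> 'rV[R]_3).
Hypotheses (H_ge0 : 0 <= H) (beta_ge0 : 0 <= beta).

Let aw := aw L H beta xt.
Let dw := dw L H beta xt.

Lemma aw_ge0 i j : 0 <= aw i j.
Proof. by rewrite /aw /Defs.aw; case: ifP => // _; rewrite divr_ge0 ?powR_ge0. Qed.

Lemma aw_leH i j : aw i j <= H.
Proof.
rewrite /aw /Defs.aw; case: ifP => // _.
have : 1 <= (1 + sqnorm3 (xt j - xt i) / 2) `^ beta.
  by apply: powR_ge1 => //; rewrite lerDl divr_ge0 ?sqnorm3_ge0.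
by move=> ge1; rewrite ler_pdivrMr ?(lt_le_trans ltr01) // ler_peMr.
Qed.

Lemma aw_ge_bound i j (B : R) : j \in L i -> sqnorm3 (xt j - xt i) / 2 <= B ->
  H / (1 + B) `^ beta <= aw i j.
Proof.
move=> jLi le_sB; rewrite /aw /Defs.aw jLi ler_wpM2l //.
set s := sqnorm3 _ / 2 in le_sB *.
have s_ge0 : 0 <= s by rewrite divr_ge0 ?sqnorm3_ge0.
rewrite lef_pV2 ?posrE ?powR_gt0 ?ge0_ler_powR ?nnegrE ?lerD2l //; lra.
Qed.

Lemma dw_le i : (forall j, j \in L i -> (j < i)%N) -> dw i <= k%:R * H.
Proof.
move=> lt_Li; apply: le_trans (_ : \sum_(j in L i) H <= _).
  by apply: ler_sum => j _; apply: aw_leH.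
by rewrite sumr_const -[H *+ _]mulr_natl ler_wpM2r // ler_nat (card_lt_ord_le lt_Li).
Qed.

Lemma dw_ge i (d : R) : L i != finset.set0 -> (forall j, j \in L i -> d <= aw i j) ->
  d <= dw i.
Proof.
case/finset.set0Pn=> j jLi le_d; rewrite /dw /Defs.dw (bigD1 j) //= -[d]addr0.
by rewrite lerD ?le_d // sumr_ge0 // => l _; apply: aw_ge0.
Qed.

End Weights.

Lemma dw_ge_bound (R : realType) k (L : 'I_k.+1 -> {set 'I_k.+1}) (H beta B : R)
    (xt : 'I_k.+1 -> 'rV[R]_3) (i : 'I_k.+1) :
  0 <= H -> 0 <= beta -> hier_leaders L -> reduced_sqnorm xt <= B -> (0 < i)%N ->
  H / (1 + B) `^ beta <= dw L H beta xt i.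
Proof.
move=> H_ge0 beta_ge0 [_ ne_L] le_xB i_gt0.
apply: (dw_ge H_ge0 (ne_L _ i_gt0)) => j jLi.
apply: aw_ge_bound => //; rewrite ler_pdivrMr // mulrC.
exact: le_trans (sqnorm3_pair_le_reduced _ _ _) (ler_wpM2l _ le_xB).
Qed.

Section IterationMatrix.
Variables (R : realType) (k : nat) (L : 'I_k.+1 -> {set 'I_k.+1}).
Variables (H beta h : R) (xt : 'I_k.+1 -> 'rV[R]_3).
Hypotheses (H_ge0 : 0 <= H) (beta_ge0 : 0 <= beta) (h_ge0 : 0 <= h).

Let S := Smat L H beta h xt.
Let a i j := aw L H beta xt (lift ord0 i) (lift ord0 j).
Let d i := dw L H beta xt (lift ord0 i).

Lemma SmatE i j :
  S i j = if i == j then 1 - h * d i else if (j < i)%N then h * a i j else 0.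
Proof.
rewrite /S /Smat /Lmat !mxE; case: eqVneq => [->|_]; first by rewrite mulr1n.
by rewrite add0r; case: ifP; rewrite ?mulrN ?opprK // mulr0 oppr0.
Qed.

Lemma Smat_ge0 i j : hier_leaders L -> h * (k%:R * H) <= 1 -> 0 <= S i j.
Proof.
move=> [lt_L _] le_hkH; rewrite SmatE; case: eqP => _.
  by rewrite subr_ge0 (le_trans _ le_hkH) // ler_wpM2l //; apply: dw_le => //; apply: lt_L.
by case: ifP => // _; rewrite mulr_ge0 // aw_ge0.
Qed.

Lemma Smat_le (dlo : R) i j : (forall i, dlo <= d i) -> h * (H + dlo) <= 1 ->
  S i j <= 1 - h * dlo.
Proof.
move=> le_d le_hHd; have h_aH l m : h * a l m <= h * H by rewrite ler_wpM2l ?aw_leH.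
have hH_ge0 : 0 <= h * H by rewrite mulr_ge0.
rewrite SmatE; case: eqP => _; first by rewrite lerB // ler_wpM2l.
case: ifP => _; first by have := h_aH i j; lra.
lra.
Qed.

End IterationMatrix.

Theorem proposition2 (R : realType) (k : nat) (H beta h B : R)
  (L : 'I_k.+1 -> {set 'I_k.+1}) (xt : nat -> 'I_k.+1 -> 'rV[R]_3) :
  (1 <= k)%N -> 0 < H -> 0 < beta -> 0 < h ->
  hier_leaders L ->
  0 <= B -> (forall n : nat, reduced_sqnorm (xt n) <= B) ->
  h < 1 / (2 * k%:R * H) ->
  forall n : nat,
    (forall i j : 'I_k, 0 <= Smat L H beta h (xt n) i j) /\
    (forall i j : 'I_k,
       Smat L H beta h (xt n) i j <= 1 - h * (H / (1 + B) `^ beta)).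
Proof.
move=> k_ge1 H_gt0 beta_gt0 h_gt0 hierL B_ge0 bounded h_lt n.
have [[H_ge0 beta_ge0] h_ge0] := (ltW H_gt0, ltW beta_gt0, ltW h_gt0).
have hkH_lt : 2 * (h * (k%:R * H)) < 1.
  by move: h_lt; rewrite ltr_pdivlMr ?mulr_gt0 ?ltr0n // -mulrA mulrCA.
have H_le_kH : H <= k%:R * H by rewrite ler_peMl // ler1n.
have dstar_le : H / (1 + B) `^ beta <= H.
  by rewrite ler_pdivrMr ?powR_gt0 ?ler_peMr ?powR_ge1 //; lra.
split=> i j; first by apply: Smat_ge0 => //; lra.
apply: Smat_le => // [l|]; first exact: dw_ge_bound.
have : h * H <= h * (k%:R * H) by rewrite ler_wpM2l.
have : h * (H / (1 + B) `^ beta) <= h * H by rewrite ler_wpM2l.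
lra.
Qed.
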